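(* Let $a,b\in\mathbb{R}$, $a<b$, and let $f(t,x,u,z,s)$, $g(t,x,u,z,s)$ be real functions with continuous partial derivatives with respect to $x,u,z,s$. Let $(\tilde{x},\tilde{u})$ be a normal extremizer of $$L[x,u]=\int_a^b f\big(t,x(t),u(t),x(a),x(b)\big)\,dt$$ subject to $x'(t)=g\big(t,x(t),u(t),x(a),x(b)\big)$, where the endpoint condition $x(a)=x_a$ may or may not be imposed and the condition $x(b)=x_b$ may or may not be imposed. Let $H(t,x,u,p,z,s)=f(t,x,u,z,s)+p\,g(t,x,u,z,s)$. Then there exists a function $\tilde{p}$ such that, with all partial derivatives of $H$ evaluated at $\big(t,\tilde{x}(t),\tilde{u}(t),\tilde{p}(t),\tilde{x}(a),\tilde{x}(b)\big)$, for all $t\in[a,b]$: $$\tilde{x}'(t)=H_p,\qquad \tilde{p}'(t)=-H_x,\qquad H_u=0;$$ moreover, $\tilde{p}(a)=-\int_a^b H_z\,dt$ if $x(a)$ is free, and $\tilde{p}(b)=\int_a^b H_s\,dt$ if $x(b)$ is free.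
   Context: An extremizer is a local minimizer or maximizer. It is normal if the Lagrange multiplier rule holds with multiplier $1$ on $f$, i.e. $(\tilde{x},\tilde{u})$ is an extremizer of $\int_a^b\{f+\lambda(g-x')\}dt$ for some multiplier function $\lambda$ (as opposed to the abnormal case where $f$ gets coefficient $0$). $H_x,H_u,H_p,H_z,H_s$ denote partial derivatives of $H$ with respect to its 2nd–6th arguments. *)

From Stdlib Require Import Reals.
From Coquelicot Require Import Coquelicot.
Open Scope R_scope.

Definition cont5 (F : R -> R -> R -> R -> R -> R) : Prop :=
  forall t x u z s eps, 0 < eps -> exists d, 0 < d /\
    forall t' x' u' z' s', Rabs (t' - t) < d -> Rabs (x' - x) < d ->
      Rabs (u' - u) < d -> Rabs (z' - z) < d -> Rabs (s' - s) < d ->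
      Rabs (F t' x' u' z' s' - F t x u z s) < eps.

Definition pd_x (F : R -> R -> R -> R -> R -> R) t x u z s :=
  Derive (fun y => F t y u z s) x.
Definition pd_u (F : R -> R -> R -> R -> R -> R) t x u z s :=
  Derive (fun y => F t x y z s) u.
Definition pd_z (F : R -> R -> R -> R -> R -> R) t x u z s :=
  Derive (fun y => F t x u y s) z.
Definition pd_s (F : R -> R -> R -> R -> R -> R) t x u z s :=
  Derive (fun y => F t x u z y) s.

Definition smooth_xuzs (F : R -> R -> R -> R -> R -> R) : Prop :=
  cont5 F /\
  (forall t x u z s,
     ex_derive (fun y => F t y u z s) x /\ ex_derive (fun y => F t x y z s) u /\
     ex_derive (fun y => F t x u y s) z /\ ex_derive (fun y => F t x u z y) s) /\
  cont5 (pd_x F) /\ cont5 (pd_u F) /\ cont5 (pd_z F) /\ cont5 (pd_s F).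

Definition cont_on (a b : R) (v : R -> R) : Prop :=
  forall t, a <= t <= b -> forall eps, 0 < eps -> exists d, 0 < d /\
    forall s, a <= s <= b -> Rabs (s - t) < d -> Rabs (v s - v t) < eps.

(* l is the derivative of x at t relative to [a,b] (one-sided at endpoints). *)
Definition deriv_within (a b : R) (x : R -> R) (t l : R) : Prop :=
  forall eps, 0 < eps -> exists d, 0 < d /\
    forall h, h <> 0 -> Rabs h < d -> a <= t + h <= b ->
      Rabs ((x (t + h) - x t) / h - l) < eps.

Definition C1on (a b : R) (x dx : R -> R) : Prop :=
  (forall t, a <= t <= b -> deriv_within a b x t (dx t)) /\ cont_on a b dx.

(* Admissible (x, x', u): x in C^1[a,b], u in C[a,b], the endpoint condition
   x(a)=xa imposed iff fixA = true, and x(b)=xb imposed iff fixB = true. *)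
Definition admissible (a b : R) (fixA : bool) (xa : R) (fixB : bool) (xb : R)
    (x dx u : R -> R) : Prop :=
  C1on a b x dx /\ cont_on a b u /\
  (fixA = true -> x a = xa) /\ (fixB = true -> x b = xb).

Definition feasible (g : R -> R -> R -> R -> R -> R) (a b : R) (fixA : bool) (xa : R)
    (fixB : bool) (xb : R) (x dx u : R -> R) : Prop :=
  admissible a b fixA xa fixB xb x dx u /\
  forall t, a <= t <= b -> dx t = g t (x t) (u t) (x a) (x b).

(* (x',dx',u') lies in the d-neighbourhood of (x,dx,u) (norm ||x||_{C^1} + ||u||_{C^0}). *)
Definition near (a b d : R) (x dx u x' dx' u' : R -> R) : Prop :=
  forall t, a <= t <= b ->
    Rabs (x' t - x t) < d /\ Rabs (dx' t - dx t) < d /\ Rabs (u' t - u t) < d.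

Definition local_extremizer (a b : R) (P : (R -> R) -> (R -> R) -> (R -> R) -> Prop)
    (J : (R -> R) -> (R -> R) -> (R -> R) -> R) (x dx u : R -> R) : Prop :=
  P x dx u /\
  ((exists d, 0 < d /\ forall x' dx' u', P x' dx' u' -> near a b d x dx u x' dx' u' ->
       J x dx u <= J x' dx' u') \/
   (exists d, 0 < d /\ forall x' dx' u', P x' dx' u' -> near a b d x dx u x' dx' u' ->
       J x' dx' u' <= J x dx u)).

Definition Lfun (f : R -> R -> R -> R -> R -> R) (a b : R) (x dx u : R -> R) : R :=
  RInt (fun t => f t (x t) (u t) (x a) (x b)) a b.

Definition Jaug (f g : R -> R -> R -> R -> R -> R) (lam : R -> R) (a b : R)
    (x dx u : R -> R) : R :=
  RInt (fun t => f t (x t) (u t) (x a) (x b)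
                 + lam t * (g t (x t) (u t) (x a) (x b) - dx t)) a b.

(* Normal extremizer: an extremizer of L subject to x' = g (and endpoint
   conditions), such that for some multiplier function lam it is an
   extremizer of the augmented functional with coefficient 1 on f. *)
Definition normal_extremizer (f g : R -> R -> R -> R -> R -> R) (a b : R)
    (fixA : bool) (xa : R) (fixB : bool) (xb : R) (x dx u : R -> R) : Prop :=
  local_extremizer a b (feasible g a b fixA xa fixB xb) (Lfun f a b) x dx u /\
  exists lam : R -> R, cont_on a b lam /\
    local_extremizer a b (admissible a b fixA xa fixB xb) (Jaug f g lam a b) x dx u.

Definition Hfun (f g : R -> R -> R -> R -> R -> R) (t x u p z s : R) : R :=
  f t x u z s + p * g t x u z s.
Definition H_x f g t x u p z s := Derive (fun y => Hfun f g t y u p z s) x.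
Definition H_u f g t x u p z s := Derive (fun y => Hfun f g t x y p z s) u.
Definition H_p f g t x u p z s := Derive (fun y => Hfun f g t x u y z s) p.
Definition H_z f g t x u p z s := Derive (fun y => Hfun f g t x u p y s) z.
Definition H_s f g t x u p z s := Derive (fun y => Hfun f g t x u p z y) s.

From Stdlib Require Import Reals Lra Classical ClassicalEpsilon FunctionalExtensionality.
From Coquelicot Require Import Coquelicot.
Open Scope R_scope.

(* Since (xt, ut) extremizes the augmented functional J over all admissible triples, for
   every C^1 direction eta (vanishing at the imposed endpoints) and continuous nu the map
   ep |-> J (xt + ep eta, ut + ep nu) has a local extremum at 0, so its derivative, the
   first variation
     int_a^b (H_x eta + H_u nu + H_z eta(a) + H_s eta(b) - lam eta'),
   vanishes, the partials of H being taken at p = lam.  Taking eta = 0 and nu = H_u gives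
   H_u = 0.  Taking nu = 0 and eta(a) = eta(b) = 0, the du Bois-Reymond lemma gives
   lam = - int_a^t H_x - k, hence lam' = - H_x.  Integrating by parts then reduces the
   first variation to boundary terms, and affine eta with eta(a) = 1 or eta(b) = 1 give
   the transversality conditions.  So p = lam, and x' = H_p is the constraint itself. *)

Lemma continuity_pt_eps (h : R -> R) (t : R) : continuity_pt h t ->
  forall eps, 0 < eps -> exists d, 0 < d /\
    forall s, Rabs (s - t) < d -> Rabs (h s - h t) < eps.
Proof.
  intros Hh eps Heps.
  destruct (proj1 (continuity_pt_locally h t) Hh (mkposreal eps Heps)) as [d Hd].
  exists d; split; [apply cond_pos | exact Hd].
Qed.

Lemma Rabs_half_triang (x y z r : R) :
  Rabs (x - y) < r / 2 -> Rabs (y - z) < r / 2 -> Rabs (x - z) < r.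
Proof.
  intros. replace (x - z) with ((x - y) + (y - z)) by ring.
  eapply Rle_lt_trans; [apply Rabs_triang | lra].
Qed.

Lemma Rabs_mult_lt (x y d M : R) :
  Rabs x < d -> Rabs y <= M -> 0 < M -> Rabs (x * y) < d * M.
Proof. intros. rewrite Rabs_mult. pose proof (Rabs_pos x). pose proof (Rabs_pos y). nra. Qed.

Lemma continuity_cst (c : R) : continuity (fun _ => c).
Proof. apply continuity_const. now intros ? ?. Qed.

Lemma continuity_identity : continuity (fun t => t).
Proof. exact (derivable_continuous _ derivable_id). Qed.

(* Coquelicot integrates functions continuous on all of [R]; functions given on [[a, b]]
   are extended by constants beyond the endpoints. *)
Definition clamp (a b t : R) : R := Rmax a (Rmin b t).

Definition extend (a b : R) (h : R -> R) (t : R) : R := h (clamp a b t).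

Lemma clamp_in (a b t : R) : a <= b -> a <= clamp a b t <= b.
Proof. intros. unfold clamp, Rmax, Rmin. repeat destruct Rle_dec; lra. Qed.

Lemma clamp_id (a b t : R) : a <= t <= b -> clamp a b t = t.
Proof. intros. unfold clamp, Rmax, Rmin. repeat destruct Rle_dec; lra. Qed.

Lemma clamp_lipschitz (a b s t : R) : a <= b ->
  Rabs (clamp a b s - clamp a b t) <= Rabs (s - t).
Proof. intros. unfold clamp, Rmax, Rmin. repeat destruct Rle_dec; split_Rabs; lra. Qed.

Lemma extend_id (a b : R) (h : R -> R) (t : R) : a <= t <= b -> extend a b h t = h t.
Proof. intros Ht. unfold extend. now rewrite clamp_id. Qed.

Lemma continuity_extend (a b : R) (h : R -> R) : a <= b -> cont_on a b h ->
  continuity (extend a b h).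
Proof.
  intros Hab Hh t. apply continuity_pt_locally. intros eps.
  destruct (Hh (clamp a b t) (clamp_in a b t Hab) eps (cond_pos eps)) as [d [Hd K]].
  exists (mkposreal d Hd). intros s Hs. apply K; [now apply clamp_in|].
  eapply Rle_lt_trans; [now apply clamp_lipschitz | exact Hs].
Qed.

Lemma continuity_comp5 (G : R -> R -> R -> R -> R -> R) (c0 c1 c2 c3 c4 : R -> R) :
  cont5 G -> continuity c0 -> continuity c1 -> continuity c2 -> continuity c3 ->
  continuity c4 -> continuity (fun t => G (c0 t) (c1 t) (c2 t) (c3 t) (c4 t)).
Proof.
  intros HG H0 H1 H2 H3 H4 t. apply continuity_pt_locally. intros eps.
  destruct (HG (c0 t) (c1 t) (c2 t) (c3 t) (c4 t) eps (cond_pos eps)) as [d [Hd K]].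
  pose (near_t c := proj1 (continuity_pt_locally c t)).
  generalize (filter_and _ _ (near_t c0 (H0 t) (mkposreal d Hd))
             (filter_and _ _ (near_t c1 (H1 t) (mkposreal d Hd))
             (filter_and _ _ (near_t c2 (H2 t) (mkposreal d Hd))
             (filter_and _ _ (near_t c3 (H3 t) (mkposreal d Hd))
                             (near_t c4 (H4 t) (mkposreal d Hd)))))).
  apply filter_imp. intros s (? & ? & ? & ? & ?). now apply K.
Qed.

Lemma continuity_bounded_segment (h : R -> R) (a b : R) : a <= b -> continuity h ->
  exists M, 0 < M /\ forall t, a <= t <= b -> Rabs (h t) <= M.
Proof.
  intros Hab Hh.
  destruct (continuity_ab_maj (fun t => Rabs (h t)) a b Hab) as [m [Hm _]].
  { intros c _. apply (continuity_pt_comp h Rabs); [apply Hh | apply Rcontinuity_abs]. }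
  exists (Rabs (h m) + 1). split; [pose proof (Rabs_pos (h m)); lra|].
  intros t Ht. specialize (Hm t Ht). lra.
Qed.

Section UniformAlongCurves.

Variables (G : R -> R -> R -> R -> R -> R) (c1 c2 c3 c4 : R -> R).
Hypotheses (HG : cont5 G) (H1 : continuity c1) (H2 : continuity c2)
  (H3 : continuity c3) (H4 : continuity c4).

Lemma cont5_local_along (e : R) (t0 : R) : 0 < e ->
  exists d : posreal, forall t y1 y2 y3 y4, Rabs (t - t0) < d ->
    Rabs (y1 - c1 t) < d -> Rabs (y2 - c2 t) < d -> Rabs (y3 - c3 t) < d ->
    Rabs (y4 - c4 t) < d ->
    Rabs (G t y1 y2 y3 y4 - G t0 (c1 t0) (c2 t0) (c3 t0) (c4 t0)) < e.
Proof.
  intros He.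
  destruct (HG t0 (c1 t0) (c2 t0) (c3 t0) (c4 t0) e He) as [d0 [Hd0 K]].
  assert (Hd2 : 0 < d0 / 2) by lra.
  pose (near_t0 c := proj1 (continuity_pt_locally c t0)).
  destruct (filter_and _ _ (near_t0 c1 (H1 t0) (mkposreal _ Hd2))
           (filter_and _ _ (near_t0 c2 (H2 t0) (mkposreal _ Hd2))
           (filter_and _ _ (near_t0 c3 (H3 t0) (mkposreal _ Hd2))
                           (near_t0 c4 (H4 t0) (mkposreal _ Hd2))))) as [d Hd].
  assert (Hm : 0 < Rmin d (d0 / 2)) by (apply Rmin_pos; [apply cond_pos | lra]).
  exists (mkposreal _ Hm); simpl. intros t y1 y2 y3 y4 Ht Hy1 Hy2 Hy3 Hy4.
  pose proof (Rmin_l d (d0 / 2)). pose proof (Rmin_r d (d0 / 2)).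
  destruct (Hd t ltac:(change (Rabs (t - t0) < d); lra)) as (K1 & K2 & K3 & K4).
  simpl in K1, K2, K3, K4.
  apply K; [split_Rabs; lra | ..]; eapply Rabs_half_triang; eauto; lra.
Qed.

Lemma cont5_unif_along (a b e : R) : 0 < e ->
  exists d, 0 < d /\ forall t y1 y2 y3 y4, a <= t <= b ->
    Rabs (y1 - c1 t) < d -> Rabs (y2 - c2 t) < d -> Rabs (y3 - c3 t) < d ->
    Rabs (y4 - c4 t) < d ->
    Rabs (G t y1 y2 y3 y4 - G t (c1 t) (c2 t) (c3 t) (c4 t)) < e.
Proof.
  intros He.
  assert (He2 : 0 < e / 2) by lra.
  pose proof (fun t0 => constructive_indefinite_description _
                         (cont5_local_along (e / 2) t0 He2)) as Hsig.
  pose (delta t0 := proj1_sig (Hsig t0)).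
  destruct (compactness_value_1d a b delta) as [d Hd].
  exists d; split; [apply cond_pos|].
  intros t y1 y2 y3 y4 Ht Hy1 Hy2 Hy3 Hy4.
  destruct (NNPP _ (Hd t Ht)) as [t0 [_ [Htt0 Hdd]]].
  unfold delta in Htt0, Hdd.
  pose proof (proj2_sig (Hsig t0) t y1 y2 y3 y4 Htt0) as Ky.
  pose proof (proj2_sig (Hsig t0) t (c1 t) (c2 t) (c3 t) (c4 t) Htt0) as Kc.
  assert (R0 : forall y, Rabs (y - y) < proj1_sig (Hsig t0))
    by (intros; rewrite Rminus_diag, Rabs_R0; apply cond_pos).
  specialize (Ky ltac:(lra) ltac:(lra) ltac:(lra) ltac:(lra)).
  specialize (Kc (R0 _) (R0 _) (R0 _) (R0 _)).
  rewrite Rabs_minus_sym in Kc. eapply Rabs_half_triang; eauto.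
Qed.

End UniformAlongCurves.

Lemma cont5_swap23 (F : R -> R -> R -> R -> R -> R) :
  cont5 F -> cont5 (fun t x u z s => F t u x z s).
Proof.
  intros HF t x u z s eps He. destruct (HF t u x z s eps He) as [d [Hd K]].
  exists d; split; auto.
Qed.

Lemma cont5_swap24 (F : R -> R -> R -> R -> R -> R) :
  cont5 F -> cont5 (fun t x u z s => F t z u x s).
Proof.
  intros HF t x u z s eps He. destruct (HF t z u x s eps He) as [d [Hd K]].
  exists d; split; auto.
Qed.

Lemma cont5_swap25 (F : R -> R -> R -> R -> R -> R) :
  cont5 F -> cont5 (fun t x u z s => F t s u z x).
Proof.
  intros HF t x u z s eps He. destruct (HF t s u z x eps He) as [d [Hd K]].
  exists d; split; auto.
Qed.

Lemma diff_quotient_x_unif (F : R -> R -> R -> R -> R -> R)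
    (c1 c2 c3 c4 v w2 w3 w4 : R -> R) (a b e : R) :
  a <= b -> (forall t x u z s, ex_derive (fun y => F t y u z s) x) -> cont5 (pd_x F) ->
  continuity c1 -> continuity c2 -> continuity c3 -> continuity c4 ->
  continuity v -> continuity w2 -> continuity w3 -> continuity w4 ->
  0 < e -> locally 0 (fun ep => forall t, a <= t <= b -> ep <> 0 ->
    Rabs ((F t (c1 t + ep * v t) (c2 t + ep * w2 t) (c3 t + ep * w3 t) (c4 t + ep * w4 t)
           - F t (c1 t) (c2 t + ep * w2 t) (c3 t + ep * w3 t) (c4 t + ep * w4 t)) / ep
          - v t * pd_x F t (c1 t) (c2 t) (c3 t) (c4 t)) <= e).
Proof.
  intros Hab HD HC C1 C2 C3 C4 Cv Cw2 Cw3 Cw4 He.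
  destruct (continuity_bounded_segment v a b Hab Cv) as [Mv [HMv Bv]].
  destruct (continuity_bounded_segment w2 a b Hab Cw2) as [M2 [HM2 B2]].
  destruct (continuity_bounded_segment w3 a b Hab Cw3) as [M3 [HM3 B3]].
  destruct (continuity_bounded_segment w4 a b Hab Cw4) as [M4 [HM4 B4]].
  set (M := Mv + M2 + M3 + M4).
  assert (HM : 0 < M) by (unfold M; lra).
  destruct (cont5_unif_along _ _ _ _ _ HC C1 C2 C3 C4 a b (e / M))
    as [dU [HdU KU]]; [now apply Rdiv_lt_0_compat|].
  assert (HdM : 0 < dU / M) by now apply Rdiv_lt_0_compat.
  exists (mkposreal _ HdM). intros ep Hep t Ht Hep0.
  change (Rabs (ep - 0) < dU / M) in Hep. rewrite Rminus_0_r in Hep.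
  assert (Hmove : forall (h : R -> R) r, Rabs (h t) <= M -> Rabs (r + ep * h t - r) < dU).
  { intros h r Hh. replace (r + ep * h t - r) with (ep * h t) by ring.
    replace dU with (dU / M * M) by (field; lra). now apply Rabs_mult_lt. }
  specialize (Bv t Ht); specialize (B2 t Ht); specialize (B3 t Ht); specialize (B4 t Ht).
  set (y2 := c2 t + ep * w2 t); set (y3 := c3 t + ep * w3 t); set (y4 := c4 t + ep * w4 t).
  destruct (MVT_cor4 (fun y => F t y y2 y3 y4) (Derive (fun y => F t y y2 y3 y4))
              (c1 t) (Rabs (ep * v t)) (fun c _ => Derive_correct _ _ (HD t c y2 y3 y4))
              (c1 t + ep * v t)) as [c [Hc Hcl]].
  { replace (c1 t + ep * v t - c1 t) with (ep * v t) by ring. apply Rle_refl. }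
  specialize (KU t c y2 y3 y4 Ht).
  specialize (KU ltac:(eapply Rle_lt_trans; [exact Hcl | apply Hmove; unfold M; lra])
                ltac:(apply Hmove; unfold M; lra) ltac:(apply Hmove; unfold M; lra)
                ltac:(apply Hmove; unfold M; lra)).
  rewrite Hc, Rplus_minus_l.
  replace (Derive (fun y => F t y y2 y3 y4) c * (ep * v t) / ep)
    with (v t * Derive (fun y => F t y y2 y3 y4) c) by (field; auto).
  rewrite <- Rmult_minus_distr_l, Rabs_mult.
  replace e with (M * (e / M)) by (field; lra).
  apply Rmult_le_compat; auto using Rabs_pos, Rlt_le; unfold M; lra.
Qed.

Lemma Rabs_triang4 (p q r s : R) : Rabs (p + q + r + s) <= Rabs p + Rabs q + Rabs r + Rabs s.
Proof.
  pose proof (Rabs_triang (p + q + r) s). pose proof (Rabs_triang (p + q) r).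
  pose proof (Rabs_triang p q). lra.
Qed.

(* The increment is telescoped one argument at a time; each step is [diff_quotient_x_unif]
   for F with that argument swapped into second position, the arguments already moved
   being perturbed and the others not (direction [0]). *)
Lemma diff_quotient_unif (F : R -> R -> R -> R -> R -> R) (X U eta nu : R -> R)
    (Z S hz hs a b e : R) :
  a <= b -> smooth_xuzs F -> continuity X -> continuity U -> continuity eta ->
  continuity nu -> 0 < e -> locally 0 (fun ep => forall t, a <= t <= b -> ep <> 0 ->
    Rabs ((F t (X t + ep * eta t) (U t + ep * nu t) (Z + ep * hz) (S + ep * hs)
           - F t (X t) (U t) Z S) / ep
          - (pd_x F t (X t) (U t) Z S * eta t + pd_u F t (X t) (U t) Z S * nu t
             + pd_z F t (X t) (U t) Z S * hz + pd_s F t (X t) (U t) Z S * hs)) <= e).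
Proof.
  intros Hab [_ [HD [Cx [Cu [Cz Cs]]]]] HX HU Heta Hnu He.
  assert (He4 : 0 < e / 4) by lra.
  pose proof (continuity_cst 0) as C0.
  pose proof (diff_quotient_x_unif F X U (fun _ => Z) (fun _ => S) eta nu (fun _ => hz)
              (fun _ => hs) a b (e / 4) Hab (fun t x u z s => proj1 (HD t x u z s)) Cx
              HX HU (continuity_cst Z) (continuity_cst S) Heta Hnu (continuity_cst hz)
              (continuity_cst hs) He4) as Ix.
  pose proof (diff_quotient_x_unif (fun t u x z s => F t x u z s) U X (fun _ => Z)
              (fun _ => S) nu (fun _ => 0) (fun _ => hz) (fun _ => hs) a b (e / 4) Hab
              (fun t x u z s => proj1 (proj2 (HD t u x z s))) (cont5_swap23 _ Cu) HU HX
              (continuity_cst Z) (continuity_cst S) Hnu C0 (continuity_cst hz)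
              (continuity_cst hs) He4) as Iu.
  pose proof (diff_quotient_x_unif (fun t z u x s => F t x u z s) (fun _ => Z) U X
              (fun _ => S) (fun _ => hz) (fun _ => 0) (fun _ => 0) (fun _ => hs) a b (e / 4)
              Hab (fun t x u z s => proj1 (proj2 (proj2 (HD t z u x s))))
              (cont5_swap24 _ Cz) (continuity_cst Z) HU HX (continuity_cst S)
              (continuity_cst hz) C0 C0 (continuity_cst hs) He4) as Iz.
  pose proof (diff_quotient_x_unif (fun t s u z x => F t x u z s) (fun _ => S) U
              (fun _ => Z) X (fun _ => hs) (fun _ => 0) (fun _ => 0) (fun _ => 0) a b (e / 4)
              Hab (fun t x u z s => proj2 (proj2 (proj2 (HD t s u z x))))
              (cont5_swap25 _ Cs) (continuity_cst S) HU (continuity_cst Z) HX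
              (continuity_cst hs) C0 C0 C0 He4) as Is.
  generalize (filter_and _ _ Ix (filter_and _ _ Iu (filter_and _ _ Iz Is))).
  apply filter_imp. clear Ix Iu Iz Is. intros ep (Ix & Iu & Iz & Is) t Ht Hep0.
  specialize (Ix t Ht Hep0). specialize (Iu t Ht Hep0).
  specialize (Iz t Ht Hep0). specialize (Is t Ht Hep0).
  unfold pd_x, pd_u, pd_z, pd_s in *; cbv beta in *.
  rewrite ?Rmult_0_r, ?Rplus_0_r in Iu; rewrite ?Rmult_0_r, ?Rplus_0_r in Iz;
    rewrite ?Rmult_0_r, ?Rplus_0_r in Is.
  match type of Ix with Rabs ?q <= _ => set (q1 := q) in Ix end.
  match type of Iu with Rabs ?q <= _ => set (q2 := q) in Iu end.
  match type of Iz with Rabs ?q <= _ => set (q3 := q) in Iz end.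
  match type of Is with Rabs ?q <= _ => set (q4 := q) in Is end.
  match goal with |- Rabs ?q <= _ => replace q with (q1 + q2 + q3 + q4)
    by (unfold q1, q2, q3, q4; field; exact Hep0) end.
  pose proof (Rabs_triang4 q1 q2 q3 q4). lra.
Qed.

Lemma continuity_ex_RInt (h : R -> R) (a b : R) : continuity h -> ex_RInt h a b.
Proof.
  intros Hh. apply (@ex_RInt_continuous R_CompleteNormedModule). intros z _.
  apply continuity_pt_filterlim, Hh.
Qed.

Lemma RInt_Rplus (h k : R -> R) (a b : R) : continuity h -> continuity k ->
  RInt (fun t => h t + k t) a b = RInt h a b + RInt k a b.
Proof.
  intros Hh Hk.
  exact (RInt_plus h k a b (continuity_ex_RInt h a b Hh) (continuity_ex_RInt k a b Hk)).
Qed.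

Lemma RInt_Rminus (h k : R -> R) (a b : R) : continuity h -> continuity k ->
  RInt (fun t => h t - k t) a b = RInt h a b - RInt k a b.
Proof.
  intros Hh Hk.
  exact (RInt_minus h k a b (continuity_ex_RInt h a b Hh) (continuity_ex_RInt k a b Hk)).
Qed.

Lemma RInt_Rscal (h : R -> R) (a b c : R) : continuity h ->
  RInt (fun t => c * h t) a b = c * RInt h a b.
Proof. intros Hh. exact (RInt_scal h a b c (continuity_ex_RInt h a b Hh)). Qed.

Lemma RInt_ext_segment (h k : R -> R) (a b : R) : a <= b ->
  (forall t, a <= t <= b -> h t = k t) -> RInt h a b = RInt k a b.
Proof.
  intros Hab Hhk. apply RInt_ext. intros t Ht.
  rewrite Rmin_left, Rmax_right in Ht by lra. apply Hhk; lra.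
Qed.

Lemma RInt_eq0_segment (h : R -> R) (a b : R) : a <= b ->
  (forall t, a <= t <= b -> h t = 0) -> RInt h a b = 0.
Proof.
  intros Hab Hh. rewrite (RInt_ext_segment h (fun _ => 0) a b Hab Hh), RInt_const.
  exact (Rmult_0_r _).
Qed.

Lemma is_derive_RInt_continuity (h : R -> R) (a t : R) : continuity h ->
  is_derive (fun s => RInt h a s) t (h t).
Proof.
  intros Hh. apply is_derive_RInt with a; [|apply continuity_pt_filterlim, Hh].
  exists (mkposreal 1 Rlt_0_1). intros s _. now apply RInt_correct, continuity_ex_RInt.
Qed.

Lemma is_derive_continuity (F w : R -> R) : (forall t, is_derive F t (w t)) -> continuity F.
Proof.
  intros HF t. apply continuity_pt_filterlim.
  apply (@ex_derive_continuous R_AbsRing R_NormedModule). now exists (w t).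
Qed.

Lemma RInt_is_derive (F w : R -> R) (a b : R) : (forall t, is_derive F t (w t)) ->
  continuity w -> RInt w a b = F b - F a.
Proof.
  intros HF Hw. apply is_RInt_unique.
  apply (is_RInt_derive F w a b); intros t _; [apply HF|].
  apply continuity_pt_filterlim, Hw.
Qed.

Lemma RInt_by_parts_primitive (A eta w : R -> R) (a b : R) :
  continuity A -> continuity w -> (forall t, is_derive eta t (w t)) ->
  RInt (fun t => A t * eta t) a b = RInt A a b * eta b - RInt (fun t => RInt A a t * w t) a b.
Proof.
  intros HA Hw Heta.
  pose (P t := RInt A a t).
  assert (HP : forall t, is_derive P t (A t)) by (intros; now apply is_derive_RInt_continuity).
  assert (CP := is_derive_continuity P A HP).
  assert (Ceta := is_derive_continuity eta w Heta).
  assert (Hprod : RInt (fun t => A t * eta t + P t * w t) a b = P b * eta b - P a * eta a).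
  { apply (RInt_is_derive (fun t => P t * eta t));
      [|apply continuity_plus; apply continuity_mult; auto].
    intros t. apply (is_derive_mult P eta); auto. intros; apply Rmult_comm. }
  rewrite RInt_Rplus in Hprod by (apply continuity_mult; auto).
  assert (Pa : P a = 0) by exact (RInt_point a A).
  rewrite Pa in Hprod. unfold P in Hprod; cbv beta in Hprod. lra.
Qed.

Lemma RInt_sqr_eq0 (h : R -> R) (a b : R) : a < b -> continuity h ->
  RInt (fun t => h t * h t) a b = 0 -> forall t, a <= t <= b -> h t = 0.
Proof.
  intros Hab Hh HI t0 Ht0. apply NNPP. intros Hne.
  pose (h2 t := h t * h t).
  assert (Ch2 : continuity h2) by now apply continuity_mult.
  assert (Hpos : 0 < h2 t0)
    by (unfold h2; pose proof (Rsqr_pos_lt _ Hne); unfold Rsqr in *; lra).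
  destruct (continuity_pt_eps h2 t0 (Ch2 t0) _ Hpos) as [d [Hd K]].
  set (c := Rmax a (t0 - d / 2)). set (e := Rmin b (t0 + d / 2)).
  assert (Hc : a <= c /\ t0 - d / 2 <= c) by (split; [apply Rmax_l | apply Rmax_r]).
  assert (He : e <= b /\ e <= t0 + d / 2) by (split; [apply Rmin_l | apply Rmin_r]).
  assert (Hce : c < e) by (unfold c, e, Rmax, Rmin; repeat destruct Rle_dec; lra).
  assert (Hex : forall u v, ex_RInt h2 u v) by (intros; now apply continuity_ex_RInt).
  assert (Hsplit : RInt h2 a c + RInt h2 c e + RInt h2 e b = RInt h2 a b).
  { assert (RInt h2 a c + RInt h2 c e = RInt h2 a e)
      by exact (RInt_Chasles h2 a c e (Hex _ _) (Hex _ _)).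
    assert (RInt h2 a e + RInt h2 e b = RInt h2 a b)
      by exact (RInt_Chasles h2 a e b (Hex _ _) (Hex _ _)).
    lra. }
  assert (Hnonneg : forall u v, u <= v -> 0 <= RInt h2 u v)
    by (intros; apply RInt_ge_0; auto; intros; unfold h2; nra).
  assert (Hmid : 0 < RInt h2 c e).
  { apply RInt_gt_0; auto; [|intros; apply continuity_pt_filterlim, Ch2].
    intros x Hx. assert (Rabs (x - t0) < d) by (split_Rabs; lra).
    specialize (K x H). split_Rabs; lra. }
  pose proof (Hnonneg a c ltac:(lra)). pose proof (Hnonneg e b ltac:(lra)).
  fold h2 in HI. lra.
Qed.

Definition perturb (x v : R -> R) (ep t : R) : R := x t + ep * v t.

Lemma perturb_0 (x v : R -> R) : perturb x v 0 = x.
Proof. apply functional_extensionality. intros t. unfold perturb. ring. Qed.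

Lemma deriv_within_cont_on (a b : R) (x dx : R -> R) :
  (forall t, a <= t <= b -> deriv_within a b x t (dx t)) -> cont_on a b x.
Proof.
  intros Hx t Ht eps He.
  destruct (Hx t Ht 1 Rlt_0_1) as [d1 [Hd1 K]].
  set (M := Rabs (dx t) + 1).
  assert (HM : 0 < M) by (unfold M; pose proof (Rabs_pos (dx t)); lra).
  exists (Rmin d1 (eps / M)). split; [apply Rmin_pos; auto; now apply Rdiv_lt_0_compat|].
  intros s Hs Hst.
  destruct (Req_dec s t) as [->|Hne]; [now rewrite Rminus_diag, Rabs_R0|].
  pose proof (Rmin_l d1 (eps / M)). pose proof (Rmin_r d1 (eps / M)).
  specialize (K (s - t) ltac:(lra) ltac:(lra) ltac:(replace (t + (s - t)) with s by ring; lra)).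
  replace (t + (s - t)) with s in K by ring.
  assert (Hq : Rabs ((x s - x t) / (s - t)) <= M).
  { unfold M. replace ((x s - x t) / (s - t)) with (((x s - x t) / (s - t) - dx t) + dx t)
      by ring.
    eapply Rle_trans; [apply Rabs_triang | lra]. }
  replace (x s - x t) with ((s - t) * ((x s - x t) / (s - t))) by (field; lra).
  replace eps with (eps / M * M) by (field; lra).
  apply Rabs_mult_lt; auto; lra.
Qed.

Lemma deriv_within_perturb (a b : R) (x eta : R -> R) (dx w ep t : R) :
  deriv_within a b x t dx -> is_derive eta t w ->
  deriv_within a b (perturb x eta ep) t (dx + ep * w).
Proof.
  intros Hx Heta eps Heps. apply is_derive_Reals in Heta.
  destruct (Hx (eps / 2)) as [d1 [Hd1 K1]]; [lra|].
  assert (Hp : 0 < eps / (2 * (Rabs ep + 1)))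
    by (apply Rdiv_lt_0_compat; [lra | pose proof (Rabs_pos ep); lra]).
  destruct (Heta _ Hp) as [d2 K2].
  exists (Rmin d1 d2). split; [apply Rmin_pos; auto; apply cond_pos|].
  intros h Hh0 Hh Hin. unfold perturb.
  pose proof (Rmin_l d1 d2). pose proof (Rmin_r d1 d2).
  specialize (K1 h Hh0 ltac:(lra) Hin). specialize (K2 h Hh0 ltac:(lra)).
  replace ((x (t + h) + ep * eta (t + h) - (x t + ep * eta t)) / h - (dx + ep * w))
    with (((x (t + h) - x t) / h - dx) + ep * ((eta (t + h) - eta t) / h - w))
    by (field; auto).
  eapply Rle_lt_trans; [apply Rabs_triang|]. rewrite Rabs_mult.
  assert (Rabs ep * Rabs ((eta (t + h) - eta t) / h - w)
          <= Rabs ep * (eps / (2 * (Rabs ep + 1))))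
    by (apply Rmult_le_compat_l; [apply Rabs_pos | lra]).
  assert (Rabs ep * (eps / (2 * (Rabs ep + 1))) < eps / 2).
  { pose proof (Rabs_pos ep). apply (Rmult_lt_reg_r (2 * (Rabs ep + 1))); [lra|].
    field_simplify; [nra | lra]. }
  lra.
Qed.

Lemma cont_on_perturb (a b : R) (h w : R -> R) (ep : R) :
  cont_on a b h -> continuity w -> cont_on a b (perturb h w ep).
Proof.
  intros Hh Hw t Ht eps He.
  assert (Hw' : continuity (fun t => ep * w t)) by (apply continuity_scal; auto).
  destruct (Hh t Ht (eps / 2)) as [d1 [Hd1 K1]]; [lra|].
  destruct (continuity_pt_eps _ t (Hw' t) (eps / 2)) as [d2 [Hd2 K2]]; [lra|].
  exists (Rmin d1 d2). split; [now apply Rmin_pos|].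
  intros s Hs Hst. unfold perturb.
  pose proof (Rmin_l d1 d2). pose proof (Rmin_r d1 d2).
  specialize (K1 s Hs ltac:(lra)). specialize (K2 s ltac:(lra)).
  replace (h s + ep * w s - (h t + ep * w t)) with ((h s - h t) + (ep * w s - ep * w t))
    by ring.
  eapply Rle_lt_trans; [apply Rabs_triang | lra].
Qed.

Section Perturbation.

Variables (a b : R) (fixA : bool) (xa : R) (fixB : bool) (xb : R) (x dx u eta w nu : R -> R).
Hypotheses (Heta : forall t, is_derive eta t (w t)) (Hw : continuity w) (Hnu : continuity nu)
  (HA : fixA = true -> eta a = 0) (HB : fixB = true -> eta b = 0).

Lemma admissible_perturb (ep : R) : admissible a b fixA xa fixB xb x dx u ->
  admissible a b fixA xa fixB xb (perturb x eta ep) (perturb dx w ep) (perturb u nu ep).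
Proof.
  intros [[Hx Hdx] [Hu [HxA HxB]]].
  repeat split.
  - intros t Ht. exact (deriv_within_perturb a b x eta (dx t) (w t) ep t (Hx t Ht) (Heta t)).
  - now apply cont_on_perturb.
  - now apply cont_on_perturb.
  - intros Hf. unfold perturb. rewrite (HA Hf), (HxA Hf). ring.
  - intros Hf. unfold perturb. rewrite (HB Hf), (HxB Hf). ring.
Qed.

Lemma near_perturb (d : R) : a <= b -> 0 < d -> exists d', 0 < d' /\
  forall ep, Rabs ep < d' ->
    near a b d x dx u (perturb x eta ep) (perturb dx w ep) (perturb u nu ep).
Proof.
  intros Hab Hd.
  destruct (continuity_bounded_segment eta a b Hab (is_derive_continuity eta w Heta))
    as [Me [HMe Beta]].
  destruct (continuity_bounded_segment w a b Hab Hw) as [Mw [HMw Bw]].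
  destruct (continuity_bounded_segment nu a b Hab Hnu) as [Mn [HMn Bnu]].
  set (M := Me + Mw + Mn).
  assert (HM : 0 < M) by (unfold M; lra).
  exists (d / M); split; [now apply Rdiv_lt_0_compat|].
  intros ep Hep t Ht. unfold perturb.
  replace d with (d / M * M) by (field; lra).
  specialize (Beta t Ht). specialize (Bw t Ht). specialize (Bnu t Ht).
  repeat split; rewrite Rplus_minus_l; apply Rabs_mult_lt; auto; unfold M; lra.
Qed.

Lemma local_extremizer_perturb (J : (R -> R) -> (R -> R) -> (R -> R) -> R) : a <= b ->
  local_extremizer a b (admissible a b fixA xa fixB xb) J x dx u ->
  let Phi ep := J (perturb x eta ep) (perturb dx w ep) (perturb u nu ep) in
  (exists d, 0 < d /\ forall ep, Rabs ep < d -> Phi 0 <= Phi ep) \/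
  (exists d, 0 < d /\ forall ep, Rabs ep < d -> Phi ep <= Phi 0).
Proof.
  intros Hab [Hadm Hext] Phi. unfold Phi. rewrite !perturb_0.
  destruct Hext as [[d [Hd K]] | [d [Hd K]]]; [left | right];
    destruct (near_perturb d Hab Hd) as [d' [Hd' Hnear]];
    exists d'; split; auto; intros ep Hep;
    apply K; auto; now apply admissible_perturb.
Qed.

End Perturbation.

Lemma derivable_pt_lim_extremum_0 (Phi : R -> R) (D : R) : derivable_pt_lim Phi 0 D ->
  (exists d, 0 < d /\ forall ep, Rabs ep < d -> Phi 0 <= Phi ep) \/
  (exists d, 0 < d /\ forall ep, Rabs ep < d -> Phi ep <= Phi 0) -> D = 0.
Proof.
  intros HD [[d [Hd K]] | [d [Hd K]]].
  - apply (deriv_minimum Phi (- d) d 0 (exist _ D HD)); try lra.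
    intros ep H1 H2. apply K. split_Rabs; lra.
  - apply (deriv_maximum Phi (- d) d 0 (exist _ D HD)); try lra.
    intros ep H1 H2. apply K. split_Rabs; lra.
Qed.

Lemma Derive_plus_scal (phi psi : R -> R) (p y : R) : ex_derive phi y -> ex_derive psi y ->
  Derive (fun v => phi v + p * psi v) y = Derive phi y + p * Derive psi y.
Proof.
  intros Hphi Hpsi. rewrite Derive_plus; auto.
  - now rewrite Derive_scal.
  - now apply ex_derive_scal.
Qed.

Section Hamiltonian.

Variables (f g : R -> R -> R -> R -> R -> R).
Hypotheses (Hf : smooth_xuzs f) (Hg : smooth_xuzs g).

Lemma H_x_expand t x u p z s : H_x f g t x u p z s = pd_x f t x u z s + p * pd_x g t x u z s.
Proof.
  exact (Derive_plus_scal (fun y => f t y u z s) (fun y => g t y u z s) p x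
           (proj1 (proj1 (proj2 Hf) t x u z s)) (proj1 (proj1 (proj2 Hg) t x u z s))).
Qed.

Lemma H_u_expand t x u p z s : H_u f g t x u p z s = pd_u f t x u z s + p * pd_u g t x u z s.
Proof.
  exact (Derive_plus_scal (fun y => f t x y z s) (fun y => g t x y z s) p u
           (proj1 (proj2 (proj1 (proj2 Hf) t x u z s)))
           (proj1 (proj2 (proj1 (proj2 Hg) t x u z s)))).
Qed.

Lemma H_z_expand t x u p z s : H_z f g t x u p z s = pd_z f t x u z s + p * pd_z g t x u z s.
Proof.
  exact (Derive_plus_scal (fun y => f t x u y s) (fun y => g t x u y s) p z
           (proj1 (proj2 (proj2 (proj1 (proj2 Hf) t x u z s))))
           (proj1 (proj2 (proj2 (proj1 (proj2 Hg) t x u z s))))).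
Qed.

Lemma H_s_expand t x u p z s : H_s f g t x u p z s = pd_s f t x u z s + p * pd_s g t x u z s.
Proof.
  exact (Derive_plus_scal (fun y => f t x u z y) (fun y => g t x u z y) p s
           (proj2 (proj2 (proj2 (proj1 (proj2 Hf) t x u z s))))
           (proj2 (proj2 (proj2 (proj1 (proj2 Hg) t x u z s))))).
Qed.

End Hamiltonian.

Lemma H_p_eq (f g : R -> R -> R -> R -> R -> R) t x u p z s : H_p f g t x u p z s = g t x u z s.
Proof. apply is_derive_unique. unfold Hfun. auto_derive; auto. ring. Qed.

Lemma du_Bois_Reymond (A L : R -> R) (a b : R) : a < b -> continuity A -> continuity L ->
  (forall eta w, (forall t, is_derive eta t (w t)) -> continuity w -> eta a = 0 -> eta b = 0 ->
     RInt (fun t => A t * eta t - L t * w t) a b = 0) ->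
  exists k, forall t, a <= t <= b -> L t = - RInt A a t - k.
Proof.
  intros Hab HA HL Hvar.
  pose (P t := RInt A a t).
  assert (CP : continuity P)
    by (apply (is_derive_continuity P A); intros; now apply is_derive_RInt_continuity).
  pose (Q t := - L t - P t).
  assert (CQ : continuity Q) by (apply continuity_minus; [apply continuity_opp|]; auto).
  set (k := RInt Q a b / (b - a)).
  pose (w t := Q t - k).
  assert (Cw : continuity w) by (apply continuity_minus; auto using continuity_cst).
  pose (eta t := RInt w a t).
  assert (Heta : forall t, is_derive eta t (w t)) by (intros; now apply is_derive_RInt_continuity).
  assert (Heta_a : eta a = 0) by exact (RInt_point a w).
  assert (Heta_b : eta b = 0).
  { unfold eta, w. rewrite RInt_Rminus by auto using continuity_cst.
    rewrite (RInt_const a b k). change (RInt Q a b - (b - a) * k = 0).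
    unfold k. field. lra. }
  clearbody k.
  (* Testing against [eta = int w] with [w = Q - k] turns the variation into [int w^2]. *)
  assert (Hw2 : RInt (fun t => w t * w t) a b = 0).
  { specialize (Hvar eta w Heta Cw Heta_a Heta_b).
    assert (Ceta := is_derive_continuity eta w Heta).
    rewrite RInt_Rminus, (RInt_by_parts_primitive A eta w a b HA Cw Heta) in Hvar
      by (apply continuity_mult; auto).
    fold P in Hvar. rewrite Heta_b, Rmult_0_r, Rminus_0_l in Hvar.
    assert (E : RInt (fun t => w t * w t + P t * w t + L t * w t + k * w t) a b = 0)
      by (apply RInt_eq0_segment; [lra|]; intros t _; unfold w, Q; ring).
    rewrite !RInt_Rplus, RInt_Rscal in E;
      [| repeat first [assumption | apply continuity_cst | apply continuity_plus
                       | apply continuity_mult] ..].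
    unfold P in E. change (RInt w a b) with (eta b) in E. rewrite Heta_b in E. lra. }
  exists k. intros t Ht.
  pose proof (RInt_sqr_eq0 w a b Hab Cw Hw2 t Ht) as Hwt.
  unfold w, Q, P in Hwt. lra.
Qed.

Lemma RInt_variation_primitive (A L eta w : R -> R) (a b k : R) : a <= b ->
  continuity A -> continuity L -> continuity w -> (forall t, is_derive eta t (w t)) ->
  (forall t, a <= t <= b -> L t = - RInt A a t - k) ->
  RInt (fun t => A t * eta t - L t * w t) a b = L a * eta a - L b * eta b.
Proof.
  intros Hab HA HL Hw Heta HLA.
  pose (P t := RInt A a t).
  assert (CP : continuity P)
    by (apply (is_derive_continuity P A); intros; now apply is_derive_RInt_continuity).
  assert (Ceta := is_derive_continuity eta w Heta).
  assert (E : RInt (fun t => L t * w t + P t * w t + k * w t) a b = 0)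
    by (apply RInt_eq0_segment; auto; intros t Ht; rewrite HLA by auto; unfold P; ring).
  rewrite !RInt_Rplus, RInt_Rscal, (RInt_is_derive eta w a b Heta Hw) in E
    by repeat first [assumption | apply continuity_cst | apply continuity_plus
                    | apply continuity_mult].
  rewrite RInt_Rminus, (RInt_by_parts_primitive A eta w a b HA Hw Heta)
    by (apply continuity_mult; auto).
  rewrite (HLA a), (HLA b) by lra.
  assert (Pa : RInt A a a = 0) by exact (RInt_point a A).
  rewrite Pa. unfold P in E. lra.
Qed.

Lemma deriv_within_is_derive (a b : R) (y F : R -> R) (t l : R) :
  (forall s, a <= s <= b -> y s = F s) -> a <= t <= b -> is_derive F t l ->
  deriv_within a b y t l.
Proof.
  intros Hy Ht HF eps Heps.
  destruct (proj1 (is_derive_Reals F t l) HF eps Heps) as [d K].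
  exists d; split; [apply cond_pos|].
  intros h Hh0 Hh Hin. rewrite (Hy _ Hin), (Hy _ Ht). now apply K.
Qed.

Section FirstVariation.

Variables (f g : R -> R -> R -> R -> R -> R) (a b : R) (fixA : bool) (xa : R)
  (fixB : bool) (xb : R) (xt dxt ut lam : R -> R).
Hypotheses (Hab : a < b) (Hf : smooth_xuzs f) (Hg : smooth_xuzs g) (Hlam : cont_on a b lam)
  (Hext : local_extremizer a b (admissible a b fixA xa fixB xb) (Jaug f g lam a b) xt dxt ut).

Definition along
    (Hd : (R -> R -> R -> R -> R -> R) -> (R -> R -> R -> R -> R -> R) ->
          R -> R -> R -> R -> R -> R -> R) (t : R) : R :=
  Hd f g t (extend a b xt t) (extend a b ut t) (extend a b lam t) (xt a) (xt b).

Lemma along_id Hd t : a <= t <= b ->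
  along Hd t = Hd f g t (xt t) (ut t) (lam t) (xt a) (xt b).
Proof. intros Ht. unfold along. now rewrite !extend_id. Qed.

Lemma continuity_trajectory :
  continuity (extend a b xt) /\ continuity (extend a b dxt) /\
  continuity (extend a b ut) /\ continuity (extend a b lam).
Proof.
  destruct Hext as [[[Hx Hdx] [Hu _]] _].
  repeat split; apply continuity_extend; try lra; auto.
  now apply (deriv_within_cont_on a b xt dxt).
Qed.

Lemma continuity_along
    (pd : (R -> R -> R -> R -> R -> R) -> R -> R -> R -> R -> R -> R) Hd :
  cont5 (pd f) -> cont5 (pd g) ->
  (forall t x u p z s, Hd f g t x u p z s = pd f t x u z s + p * pd g t x u z s) ->
  continuity (along Hd).
Proof.
  intros Cf Cg Hexp. destruct continuity_trajectory as (CX & _ & CU & CL).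
  assert (HC : forall F, cont5 F -> continuity (fun t => F t (extend a b xt t)
                 (extend a b ut t) (xt a) (xt b)))
    by (intros; apply continuity_comp5; auto using continuity_cst, continuity_identity).
  replace (along Hd) with (fun t => pd f t (extend a b xt t) (extend a b ut t) (xt a) (xt b)
     + extend a b lam t * pd g t (extend a b xt t) (extend a b ut t) (xt a) (xt b))
    by (apply functional_extensionality; intros; symmetry; apply Hexp).
  apply continuity_plus; [|apply continuity_mult]; auto.
Qed.

Lemma continuity_along_H :
  continuity (along H_x) /\ continuity (along H_u) /\ continuity (along H_z) /\
  continuity (along H_s).
Proof.
  destruct Hf as (_ & _ & Fx & Fu & Fz & Fs), Hg as (_ & _ & Gx & Gu & Gz & Gs).
  repeat split.
  - exact (continuity_along pd_x H_x Fx Gx (H_x_expand f g Hf Hg)).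
  - exact (continuity_along pd_u H_u Fu Gu (H_u_expand f g Hf Hg)).
  - exact (continuity_along pd_z H_z Fz Gz (H_z_expand f g Hf Hg)).
  - exact (continuity_along pd_s H_s Fs Gs (H_s_expand f g Hf Hg)).
Qed.

Definition variation_integrand (eta w nu : R -> R) (t : R) : R :=
  along H_x t * eta t + along H_u t * nu t + along H_z t * eta a + along H_s t * eta b
  - extend a b lam t * w t.

Definition aug_perturbed (eta w nu : R -> R) (ep t : R) : R :=
  f t (extend a b xt t + ep * eta t) (extend a b ut t + ep * nu t)
    (xt a + ep * eta a) (xt b + ep * eta b)
  + extend a b lam t * (g t (extend a b xt t + ep * eta t) (extend a b ut t + ep * nu t)
                          (xt a + ep * eta a) (xt b + ep * eta b)
                        - (extend a b dxt t + ep * w t)).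

Section Directions.

Variables (eta w nu : R -> R).
Hypotheses (Heta : forall t, is_derive eta t (w t)) (Hw : continuity w) (Hnu : continuity nu).

Lemma Jaug_perturb (ep : R) :
  Jaug f g lam a b (perturb xt eta ep) (perturb dxt w ep) (perturb ut nu ep)
  = RInt (aug_perturbed eta w nu ep) a b.
Proof.
  apply RInt_ext_segment; [lra|]. intros t Ht.
  unfold aug_perturbed, perturb. now rewrite !extend_id.
Qed.

Lemma continuity_aug_perturbed (ep : R) : continuity (aug_perturbed eta w nu ep).
Proof.
  destruct continuity_trajectory as (CX & CDX & CU & CL).
  assert (Ceta := is_derive_continuity eta w Heta).
  assert (Cshift : forall h v, continuity h -> continuity v ->
                    continuity (fun t => h t + ep * v t))
    by (intros; apply continuity_plus; [|apply continuity_scal]; auto).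
  assert (HC : forall F, cont5 F -> continuity (fun t => F t (extend a b xt t + ep * eta t)
                 (extend a b ut t + ep * nu t) (xt a + ep * eta a) (xt b + ep * eta b)))
    by (intros; apply continuity_comp5; auto using continuity_cst, continuity_identity).
  apply continuity_plus; [apply HC, Hf|].
  apply continuity_mult; [auto|]. apply continuity_minus; [apply HC, Hg | auto].
Qed.

Lemma aug_quotient_unif (e : R) : 0 < e ->
  locally 0 (fun ep => forall t, a <= t <= b -> ep <> 0 ->
    Rabs ((aug_perturbed eta w nu ep t - aug_perturbed eta w nu 0 t) / ep
          - variation_integrand eta w nu t) <= e).
Proof.
  intros He. destruct continuity_trajectory as (CX & _ & CU & CL).
  assert (Ceta := is_derive_continuity eta w Heta).
  destruct (continuity_bounded_segment _ a b (Rlt_le _ _ Hab) CL) as [ML [HML BL]].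
  set (e1 := e / (1 + ML)).
  assert (He1 : 0 < e1) by (apply Rdiv_lt_0_compat; lra).
  generalize (filter_and _ _
    (diff_quotient_unif f (extend a b xt) (extend a b ut) eta nu (xt a) (xt b)
       (eta a) (eta b) a b e1 (Rlt_le _ _ Hab) Hf CX CU Ceta Hnu He1)
    (diff_quotient_unif g (extend a b xt) (extend a b ut) eta nu (xt a) (xt b)
       (eta a) (eta b) a b e1 (Rlt_le _ _ Hab) Hg CX CU Ceta Hnu He1)).
  apply filter_imp. intros ep [Kf Kg] t Ht Hep0.
  specialize (Kf t Ht Hep0). specialize (Kg t Ht Hep0).
  unfold aug_perturbed, variation_integrand, along.
  rewrite !Rmult_0_l, !Rplus_0_r, (H_x_expand f g Hf Hg), (H_u_expand f g Hf Hg),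
    (H_z_expand f g Hf Hg), (H_s_expand f g Hf Hg).
  match type of Kf with Rabs ?q <= _ => set (qf := q) in Kf end.
  match type of Kg with Rabs ?q <= _ => set (qg := q) in Kg end.
  match goal with |- Rabs ?q <= _ => replace q with (qf + extend a b lam t * qg)
    by (unfold qf, qg; field; exact Hep0) end.
  eapply Rle_trans; [apply Rabs_triang|]. rewrite Rabs_mult.
  specialize (BL t Ht).
  assert (Rabs (extend a b lam t) * Rabs qg <= ML * e1)
    by (apply Rmult_le_compat; auto using Rabs_pos).
  replace e with (e1 + ML * e1) by (unfold e1; field; lra). lra.
Qed.

Lemma continuity_variation_integrand : continuity (variation_integrand eta w nu).
Proof.
  destruct continuity_along_H as (Cx & Cu & Cz & Cs).
  destruct continuity_trajectory as (_ & _ & _ & CL).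
  assert (Ceta := is_derive_continuity eta w Heta).
  unfold variation_integrand.
  repeat first [assumption | apply continuity_cst | apply continuity_minus
               | apply continuity_plus | apply continuity_mult].
Qed.

Lemma Jaug_perturb_derivative :
  derivable_pt_lim
    (fun ep => Jaug f g lam a b (perturb xt eta ep) (perturb dxt w ep) (perturb ut nu ep))
    0 (RInt (variation_integrand eta w nu) a b).
Proof.
  intros eps Heps.
  destruct (aug_quotient_unif (eps / 2 / (b - a))) as [d K];
    [apply Rdiv_lt_0_compat; lra|].
  exists d. intros h Hh0 Hh.
  specialize (K h ltac:(change (Rabs (h - 0) < d); now rewrite Rminus_0_r)).
  rewrite Rplus_0_l, !Jaug_perturb.
  assert (CV := continuity_variation_integrand).
  assert (CA := continuity_aug_perturbed).
  assert (E : (RInt (aug_perturbed eta w nu h) a b - RInt (aug_perturbed eta w nu 0) a b) / h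
              - RInt (variation_integrand eta w nu) a b
            = RInt (fun t => / h * (aug_perturbed eta w nu h t - aug_perturbed eta w nu 0 t)
                             - variation_integrand eta w nu t) a b).
  { rewrite RInt_Rminus, RInt_Rscal, RInt_Rminus; auto.
    - field. exact Hh0.
    - apply continuity_minus; auto.
    - apply continuity_scal, continuity_minus; auto. }
  rewrite E. apply Rle_lt_trans with ((b - a) * (eps / 2 / (b - a))).
  - apply abs_RInt_le_const; [lra | |].
    + apply continuity_ex_RInt, continuity_minus; auto.
      apply continuity_scal, continuity_minus; auto.
    + intros t Ht. specialize (K t Ht Hh0).
      match goal with |- Rabs (/ h * ?X - ?Z) <= _ =>
        replace (/ h * X - Z) with (X / h - Z) by (unfold Rdiv; ring) end.
      exact K.
  - replace ((b - a) * (eps / 2 / (b - a))) with (eps / 2) by (field; lra). lra.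
Qed.

Lemma first_variation : (fixA = true -> eta a = 0) -> (fixB = true -> eta b = 0) ->
  RInt (variation_integrand eta w nu) a b = 0.
Proof.
  intros HA HB.
  apply (derivable_pt_lim_extremum_0 _ _ Jaug_perturb_derivative).
  exact (local_extremizer_perturb a b fixA xa fixB xb xt dxt ut eta w nu Heta Hw Hnu HA HB
           (Jaug f g lam a b) (Rlt_le _ _ Hab) Hext).
Qed.

End Directions.

Lemma H_u_along_zero (t : R) : a <= t <= b -> along H_u t = 0.
Proof.
  destruct continuity_along_H as (_ & Cu & _ & _).
  apply (RInt_sqr_eq0 (along H_u) a b Hab Cu).
  rewrite <- (first_variation (fun _ => 0) (fun _ => 0) (along H_u)
               (fun t => is_derive_const 0 t) (continuity_cst 0) Cu
               (fun _ => eq_refl) (fun _ => eq_refl)).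
  apply RInt_ext_segment; [lra|]. intros s _. unfold variation_integrand. ring.
Qed.

Lemma lam_primitive : exists k, forall t, a <= t <= b ->
  extend a b lam t = - RInt (along H_x) a t - k.
Proof.
  destruct continuity_along_H as (Cx & _ & _ & _).
  destruct continuity_trajectory as (_ & _ & _ & CL).
  apply du_Bois_Reymond; auto. intros eta w Heta Hw Ha Hb.
  rewrite <- (first_variation eta w (fun _ => 0) Heta Hw (continuity_cst 0)
               (fun _ => Ha) (fun _ => Hb)).
  apply RInt_ext_segment; [lra|]. intros t _. unfold variation_integrand. rewrite Ha, Hb. ring.
Qed.

Lemma boundary_variation (eta w : R -> R) :
  (forall t, is_derive eta t (w t)) -> continuity w ->
  (fixA = true -> eta a = 0) -> (fixB = true -> eta b = 0) ->
  (RInt (along H_z) a b + lam a) * eta a + (RInt (along H_s) a b - lam b) * eta b = 0.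
Proof.
  intros Heta Hw HA HB.
  destruct lam_primitive as [k Hk].
  destruct continuity_along_H as (Cx & _ & Cz & Cs).
  destruct continuity_trajectory as (_ & _ & _ & CL).
  pose proof (first_variation eta w (fun _ => 0) Heta Hw (continuity_cst 0) HA HB) as V.
  rewrite (RInt_ext_segment _ (fun t => (along H_x t * eta t - extend a b lam t * w t)
             + (eta a * along H_z t + eta b * along H_s t))) in V
    by (lra || (intros; unfold variation_integrand; ring)).
  assert (Ceta := is_derive_continuity eta w Heta).
  rewrite !RInt_Rplus, !RInt_Rscal,
    (RInt_variation_primitive _ _ eta w a b k (Rlt_le _ _ Hab) Cx CL Hw Heta Hk) in V
    by repeat first [assumption | apply continuity_minus | apply continuity_plus
                    | apply continuity_scal | apply continuity_mult].
  rewrite !extend_id in V by lra. lra.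
Qed.

Lemma transversality_a : fixA = false -> lam a = - RInt (along H_z) a b.
Proof.
  intros HfA.
  assert (Heta : forall t, is_derive (fun s => (b - s) / (b - a)) t (- 1 / (b - a)))
    by (intros; auto_derive; [lra | field; lra]).
  pose proof (boundary_variation _ _ Heta (continuity_cst _)
                (fun H => ltac:(rewrite HfA in H; discriminate))
                (fun _ => ltac:(cbv beta; field; lra))) as V.
  cbv beta in V.
  replace ((b - a) / (b - a)) with 1 in V by (field; lra).
  replace ((b - b) / (b - a)) with 0 in V by (field; lra). lra.
Qed.

Lemma transversality_b : fixB = false -> lam b = RInt (along H_s) a b.
Proof.
  intros HfB.
  assert (Heta : forall t, is_derive (fun s => (s - a) / (b - a)) t (1 / (b - a)))
    by (intros; auto_derive; [lra | field; lra]).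
  pose proof (boundary_variation _ _ Heta (continuity_cst _)
                (fun _ => ltac:(cbv beta; field; lra))
                (fun H => ltac:(rewrite HfB in H; discriminate))) as V.
  cbv beta in V.
  replace ((b - a) / (b - a)) with 1 in V by (field; lra).
  replace ((a - a) / (b - a)) with 0 in V by (field; lra). lra.
Qed.

Lemma costate_equation (t : R) : a <= t <= b -> deriv_within a b lam t (- along H_x t).
Proof.
  intros Ht. destruct lam_primitive as [k Hk].
  destruct continuity_along_H as (Cx & _).
  apply (deriv_within_is_derive a b lam (fun s => - RInt (along H_x) a s - k)); auto.
  - intros s Hs. rewrite <- (Hk s Hs). symmetry. now apply extend_id.
  - apply is_derive_Reals. replace (- along H_x t) with (- along H_x t - 0) by ring.
    apply derivable_pt_lim_minus; [|apply derivable_pt_lim_const].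
    now apply derivable_pt_lim_opp, is_derive_Reals, is_derive_RInt_continuity.
Qed.

End FirstVariation.

Theorem mainTheorem4 (a b : R) (f g : R -> R -> R -> R -> R -> R)
    (fixA : bool) (xa : R) (fixB : bool) (xb : R) (xt dxt ut : R -> R) :
  a < b -> smooth_xuzs f -> smooth_xuzs g ->
  normal_extremizer f g a b fixA xa fixB xb xt dxt ut ->
  exists pt : R -> R,
    (forall t, a <= t <= b ->
       dxt t = H_p f g t (xt t) (ut t) (pt t) (xt a) (xt b) /\
       deriv_within a b pt t (- H_x f g t (xt t) (ut t) (pt t) (xt a) (xt b)) /\
       H_u f g t (xt t) (ut t) (pt t) (xt a) (xt b) = 0) /\
    (fixA = false ->
       pt a = - RInt (fun t => H_z f g t (xt t) (ut t) (pt t) (xt a) (xt b)) a b) /\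
    (fixB = false ->
       pt b = RInt (fun t => H_s f g t (xt t) (ut t) (pt t) (xt a) (xt b)) a b).
Proof.
  intros Hab Hf Hg [[[_ Hdyn] _] [lam [Hlam Hext]]].
  exists lam. split; [|split].
  - intros t Ht. split; [|split].
    + rewrite H_p_eq. exact (Hdyn t Ht).
    + rewrite <- along_id by exact Ht.
      exact (costate_equation f g a b fixA xa fixB xb xt dxt ut lam Hab Hf Hg Hlam Hext t Ht).
    + rewrite <- along_id by exact Ht.
      exact (H_u_along_zero f g a b fixA xa fixB xb xt dxt ut lam Hab Hf Hg Hlam Hext t Ht).
  - intros HfA.
    rewrite (transversality_a f g a b fixA xa fixB xb xt dxt ut lam Hab Hf Hg Hlam Hext HfA).
    f_equal. apply RInt_ext_segment; [lra|]. intros t Ht. now apply along_id.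
  - intros HfB.
    rewrite (transversality_b f g a b fixA xa fixB xb xt dxt ut lam Hab Hf Hg Hlam Hext HfB).
    apply RInt_ext_segment; [lra|]. intros t Ht. now apply along_id.
Qed.
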